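(* Let $k \geq 2$ be an integer and let $G=(V,E)$ be a $k$-connected graph with $n \geq 3$ vertices, $e$ edges, minimum degree $\delta$ and maximum degree $\Delta$. If any one of the following five conditions holds, then $G$ is Hamiltonian: [1] $$Z_1(G) \geq (n - k - 1)\Delta^2 + \frac{e^2}{2(k + 1)} + \frac{(k + 1) \Delta^3}{2 \delta};$$ [2] $$F(G) \leq (n - k - 1) \delta^3 + \frac{\delta (2 (k + 1)^2 \delta^2 - e^2)}{k + 1};$$ [3] $$F(G) \leq (n - k - 1) \delta^3 + \frac{\delta}{k + 1} \left( 2 (k + 1) \left((k + 1) \delta^2 + \frac{e^2}{n - k - 1}\right) - e^2 - 2 (k + 1) (n - k - 1) \Delta^2\right);$$ [4] $$Inv(G) \leq \frac{n - k - 1}{\Delta} + \frac{2 (k + 1)^2 \delta^2 - e^2}{(k + 1) \Delta^3};$$ [5] $$Inv(G) \leq \frac{n - k - 1}{\Delta} + \frac{1}{(k + 1) \Delta^3} \left( 2 (k + 1) \left((k + 1) \delta^2 + \frac{e^2}{n - k - 1}\right) - e^2 - 2 (k + 1) (n - k - 1) \Delta^2\right).$$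
   Context: Graphs are finite, undirected, without loops or multiple edges. $d(u)$ denotes the degree of vertex $u$; $\delta$ and $\Delta$ are the minimum and maximum degrees. The first Zagreb index is $Z_1(G)=\sum_{u\in V} d(u)^2$, the forgotten topological index is $F(G)=\sum_{u\in V} d(u)^3$, and the inverse degree is $Inv(G)=\sum_{u\in V}\frac{1}{d(u)}$. A graph is Hamiltonian if it has a cycle containing all its vertices. *)

From mathcomp Require Import all_boot all_order all_algebra.
Set Implicit Arguments. Unset Strict Implicit. Unset Printing Implicit Defensive.
Import Order.TTheory GRing.Theory Num.Theory.

Section Graphs.
Variable T : finType.
Variable g : rel T.

Definition simple_graph : Prop := symmetric g /\ irreflexive g.

Definition deg (x : T) : nat := #|[set y | g x y]|.

Definition edge_set : {set {set T}} := [set [set x; y] | x in T, y in T & g x y].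
Definition nedges : nat := #|edge_set|.

(* maximum and minimum degree (for nonempty T; #|T| exceeds every degree) *)
Definition maxdeg : nat := \max_(x : T) deg x.
Definition mindeg : nat := \big[minn/#|T|]_(x : T) deg x.

Definition induced_connected (S : {set T}) : Prop :=
  forall x y, x \in S -> y \in S ->
    connect [rel u v | [&& g u v, u \in S & v \in S]] x y.

Definition k_connected (k : nat) : Prop :=
  k < #|T| /\ forall S : {set T}, #|S| < k -> induced_connected (~: S).

Definition hamiltonian : Prop :=
  exists s : seq T, [/\ uniq s, 3 <= size s, (forall x, x \in s) & cycle g s].

Local Open Scope ring_scope.
Definition Zagreb1 (R : realFieldType) : R := \sum_(x : T) ((deg x)%:R) ^+ 2.
Definition forgotten (R : realFieldType) : R := \sum_(x : T) ((deg x)%:R) ^+ 3.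
Definition inv_degree (R : realFieldType) : R := \sum_(x : T) ((deg x)%:R)^-1.
End Graphs.

(* Take a longest cycle C and a vertex v off it, and let S be the set of
   vertices of C adjacent to the component of G - C containing v.  S separates
   v from the rest of C, so |S| >= k; and v together with the successors on C
   of the vertices of S is independent, since an edge among them would let C
   be rerouted through that component into a longer cycle (Chvatal-Erdos).
   An independent set I with |I| >= k + 1 gives
   (k + 1) delta <= sum_I d <= e <= sum_(V \ I) d <= (n - k - 1) Delta, hence
   Z_1 <= Delta e + (n - k - 1) Delta^2, while F >= Delta^3 + (n - 1) delta^3
   and Inv >= n / Delta; each of the five conditions contradicts these bounds.
   The contradiction is strict unless G is regular and I meets every edge,
   which the independent set above cannot do. *)

From mathcomp Require Import all_boot all_order all_algebra.
From mathcomp Require Import zify ring lra.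
Import Order.TTheory GRing.Theory Num.Theory.
Set Implicit Arguments. Unset Strict Implicit. Unset Printing Implicit Defensive.

Section CycleSurgery.
Variables (T : eqType) (g : rel T).
Hypothesis gsym : symmetric g.

Definition graph_cycle (s : seq T) := [&& uniq s, 2 < size s & cycle g s].

Lemma graph_cycle_rot i s : graph_cycle (rot i s) = graph_cycle s.
Proof. by rewrite /graph_cycle rot_uniq size_rot rot_cycle. Qed.

Lemma next_head (x : T) s : next (x :: s) x = head x s.
Proof. by rewrite next_nth mem_head /= eqxx; case: s. Qed.

Lemma path_rev x P y : path g x (rcons P y) -> path g y (rcons (rev P) x).
Proof.
move=> pP; rewrite -rev_cons -(belast_rcons x P y) -[y in path _ y](last_rcons x P).
by rewrite rev_path (@eq_path _ _ g) // => u w; apply: gsym.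
Qed.

Lemma graph_cycle_insert x y B P :
  graph_cycle (x :: y :: B) -> path g x (rcons P y) -> uniq P ->
  {in P, forall p, p \notin x :: y :: B} -> graph_cycle (x :: P ++ y :: B).
Proof.
case/and3P=> uC sC cC pP uP PC; apply/and3P; split.
- rewrite (perm_uniq (_ : perm_eq _ ((x :: y :: B) ++ P))).
    by rewrite cat_uniq uC uP andbT; apply/hasPn.
  by rewrite /= perm_cons perm_catC.
- by rewrite /= size_cat /=; move: sC => /=; lia.
- move: cC pP; rewrite /= !rcons_path => /and3P[_ pyB gBx] /andP[pxP gPy].
  by rewrite cat_path last_cat pxP /= gPy pyB.
Qed.

Lemma graph_cycle_cross x a A y b B P Q :
  graph_cycle (x :: a :: A ++ y :: b :: B) ->
  path g x (rcons P y) -> path g a (rcons Q b) -> uniq P -> uniq Q ->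
  {in P, forall p, p \notin x :: a :: A ++ y :: b :: B} ->
  {in Q, forall q, (q \notin x :: a :: A ++ y :: b :: B) && (q \notin P)} ->
  graph_cycle (x :: P ++ y :: rev (a :: A) ++ Q ++ b :: B).
Proof.
set C := x :: a :: A ++ y :: b :: B.
move=> /and3P[uC sC cC] pP pQ uP uQ PC QC.
have permD : perm_eq (C ++ P ++ Q) (x :: P ++ y :: rev (a :: A) ++ Q ++ b :: B).
  apply/permP => f; rewrite /C /= !count_cat /= !count_cat /= rev_cons.
  rewrite -cats1 count_cat count_rev /=; lia.
apply/and3P; split.
- rewrite -(perm_uniq permD) cat_uniq uC cat_uniq uP uQ /= andbT.
  apply/andP; split; apply/hasPn => z; last by case/QC/andP.
  by rewrite mem_cat => /orP[/PC|/QC/andP[]].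
- by rewrite -(perm_size permD) size_cat; apply: leq_trans sC (leq_addr _ _).
- move: cC; rewrite /C /= rcons_cat /= => /andP[gxa].
  rewrite -cat_rcons cat_path last_rcons /= => /and3P[pA gyb pB].
  have -> : rcons (P ++ y :: rev (a :: A) ++ Q ++ b :: B) x =
      rcons P y ++ rev (a :: A) ++ rcons Q b ++ rcons B x.
    by rewrite -!cats1 -!catA /= -!catA.
  rewrite cat_path pP last_rcons cat_path rev_cons (path_rev pA) last_rcons.
  by rewrite cat_path pQ last_rcons pB.
Qed.

Lemma longer_cycle_insert C x P :
  graph_cycle C -> x \in C -> path g x (rcons P (next C x)) -> uniq P ->
  P != [::] -> {in P, forall p, p \notin C} ->
  exists2 D, graph_cycle D & size C < size D.
Proof.
move=> gC xC pP uP P0 PC; have uC : uniq C by case/and3P: gC.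
case: (rot_to xC) => i s Ei.
have gR : graph_cycle (rot i C) by rewrite graph_cycle_rot.
rewrite -(next_rot i uC) Ei next_head in pP.
case: s Ei gR pP => [|y B] Ei gR pP; first by move: gR; rewrite Ei.
exists (x :: P ++ y :: B).
  by apply: graph_cycle_insert; rewrite -?Ei // => p /PC; rewrite mem_rot.
rewrite -(size_rot i) Ei /= size_cat /= ltnS; move: P0; rewrite -size_eq0; lia.
Qed.

(* No non-degeneracy hypothesis is needed: if [next C x = y] or
   [next C y = x], inserting [P] alone already lengthens [C]. *)
Lemma longer_cycle_cross C x y P Q :
  graph_cycle C -> x \in C -> y \in C -> x != y ->
  path g x (rcons P y) -> uniq P -> P != [::] -> {in P, forall p, p \notin C} ->
  path g (next C x) (rcons Q (next C y)) -> uniq Q ->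
  {in Q, forall q, (q \notin C) && (q \notin P)} ->
  exists2 D, graph_cycle D & size C < size D.
Proof.
move=> gC xC yC xy pP uP P0 PC pQ uQ QC; have uC : uniq C by case/and3P: gC.
case: (rot_to_arc uC xC yC xy) => i p1 p2 _ _ Ei.
have memC z : (z \in x :: p1 ++ y :: p2) = (z \in C) by rewrite -Ei mem_rot.
have uR : uniq (x :: p1 ++ y :: p2) by rewrite -Ei rot_uniq.
have nx : next C x = head y p1.
  by rewrite -(next_rot i uC) Ei next_head; case: (p1).
have ny : next C y = head x p2.
  rewrite -(next_rot i uC) Ei -(next_rot (size (x :: p1)) uR) -cat_cons.
  by rewrite rot_size_cat next_head; case: (p2).
case: p1 Ei memC uR nx => [|a A] Ei memC uR nx.
  by apply: (longer_cycle_insert gC xC _ uP P0 PC); rewrite nx.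
case: p2 Ei memC uR ny => [|b B] Ei memC uR ny.
  apply: (longer_cycle_insert gC yC _ _ _ _ (P := rev P)).
  - by rewrite ny; apply: path_rev.
  - by rewrite rev_uniq.
  - by rewrite -size_eq0 size_rev size_eq0.
  - by move=> p; rewrite mem_rev; apply: PC.
rewrite nx ny /= in pQ.
have gR : graph_cycle (x :: a :: A ++ y :: b :: B) by rewrite -Ei graph_cycle_rot.
exists (x :: P ++ y :: rev (a :: A) ++ Q ++ b :: B).
  apply: graph_cycle_cross => // [p /PC|q /QC]; rewrite memC //.
rewrite -(size_rot i) Ei /= !size_cat /= !size_cat size_rev /=.
move: P0; rewrite -size_eq0; lia.
Qed.

End CycleSurgery.

Section DegreeCounting.
Variables (T : finType) (g : rel T).
Hypotheses (gsym : symmetric g) (girr : irreflexive g).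

Definition independent (I : {set T}) := {in I &, forall a b, ~~ g a b}.

Definition arcs_from (A : {set T}) := [set p : T * T | (p.1 \in A) && g p.1 p.2].

Definition edge_of (p : T * T) : {set T} := [set p.1; p.2].

Lemma sum_deg_arcs (A : {set T}) : \sum_(x in A) deg g x = #|arcs_from A|.
Proof.
rewrite -sum1_card (eq_bigl (fun p : T * T => (p.1 \in A) && g p.1 p.2)).
  rewrite -(pair_big_dep (mem A) g (fun _ _ => 1)) /=.
  by apply: eq_bigr => x _; rewrite /deg -sum1_card; apply: eq_bigl => y; rewrite inE.
by move=> p; rewrite inE.
Qed.

Lemma edge_of_edge p : g p.1 p.2 -> edge_of p \in edge_set g.
Proof. by move=> gp; apply/imset2P; exists p.1 p.2; rewrite ?inE. Qed.

Lemma edge_setP E : E \in edge_set g -> exists a b, g a b /\ E = [set a; b].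
Proof. by case/imset2P=> a b _; rewrite inE => gab ->; exists a, b. Qed.

Section Independent.
Variable I : {set T}.
Hypothesis indI : independent I.

Lemma edge_of_arcs_inj : {in arcs_from I &, injective edge_of}.
Proof.
move=> [a b] [a' b']; rewrite !inE /= /edge_of /= => /andP[aI gab] /andP[aI' gab'] E.
have b'I : b' \notin I by apply/negP => b'I; move: (indI aI' b'I); rewrite gab'.
have /set2P[ea|eb] : a \in [set a'; b'] by rewrite -E set21.
  subst a'; have /set2P[eb|-> //] : b \in [set a; b'] by rewrite -E set22.
  by move: gab; rewrite eb girr.
by move: b'I; rewrite -eb aI.
Qed.

Lemma arcs_edges_sub : edge_of @: arcs_from I \subset edge_set g.
Proof. by apply/subsetP => E /imsetP[p]; rewrite inE => /andP[_ /edge_of_edge pE] ->. Qed.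

Lemma sum_deg_indep_le : \sum_(x in I) deg g x <= nedges g.
Proof.
by rewrite sum_deg_arcs -(card_in_imset edge_of_arcs_inj) subset_leq_card ?arcs_edges_sub.
Qed.

Lemma sum_deg_indep_lt a b :
  g a b -> a \notin I -> b \notin I -> \sum_(x in I) deg g x < nedges g.
Proof.
move=> gab aI bI; rewrite sum_deg_arcs -(card_in_imset edge_of_arcs_inj).
apply: proper_card; rewrite properE arcs_edges_sub /=; apply/subsetPn.
exists [set a; b]; first exact: (@edge_of_edge (a, b)).
apply/imsetP => -[p]; rewrite inE => /andP[pI _] E.
have /set2P[] : p.1 \in [set a; b] by rewrite E set21.
  by move=> ea; move: pI; rewrite ea (negbTE aI).
by move=> eb; move: pI; rewrite eb (negbTE bI).
Qed.

Lemma nedges_le_sum_deg_compl : nedges g <= \sum_(x in ~: I) deg g x.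
Proof.
rewrite sum_deg_arcs; apply: leq_trans (leq_imset_card edge_of _).
apply/subset_leq_card/subsetP => E /edge_setP[a [b [gab ->]]].
have [aI|aI] := boolP (a \in I).
  have bI : b \notin I by apply/negP => bI; move: (indI aI bI); rewrite gab.
  by apply/imsetP; exists (b, a); rewrite ?inE /= ?bI 1?gsym // /edge_of setUC.
by apply/imsetP; exists (a, b); rewrite ?inE /= ?aI.
Qed.

End Independent.

Lemma mindeg_le_deg x : mindeg g <= deg g x.
Proof.
rewrite /mindeg; have: x \in index_enum T by rewrite mem_index_enum.
elim: (index_enum T) => [|a r IHr] //; rewrite inE big_cons => /orP[/eqP <-|/IHr].
  exact: geq_minl.
by rewrite geq_min => ->; rewrite orbT.
Qed.

Lemma deg_le_maxdeg x : deg g x <= maxdeg g.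
Proof. exact: leq_bigmax. Qed.

Lemma mindeg_le_maxdeg : 0 < #|T| -> mindeg g <= maxdeg g.
Proof. by case/card_gt0P=> x _; rewrite (leq_trans (mindeg_le_deg x)) ?deg_le_maxdeg. Qed.

Lemma card_mindeg_le_sum_deg (A : {set T}) : #|A| * mindeg g <= \sum_(x in A) deg g x.
Proof. by rewrite -sum_nat_const leq_sum // => x _; apply: mindeg_le_deg. Qed.

Lemma sum_deg_le_card_maxdeg (A : {set T}) : \sum_(x in A) deg g x <= #|A| * maxdeg g.
Proof. by rewrite -sum_nat_const leq_sum // => x _; apply: deg_le_maxdeg. Qed.

End DegreeCounting.

Lemma connect_stable (T : finType) (e : rel T) (A : {pred T}) x y :
  (forall u w, u \in A -> e u w -> w \in A) -> x \in A -> connect e x y -> y \in A.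
Proof.
move=> stA xA /connectP[p pp ->]; elim: p x xA pp => //= z p IHp x xA /andP[exz].
exact/IHp/(stA x).
Qed.

Section Connectivity.
Variables (T : finType) (g : rel T) (k : nat).
Hypotheses (gsym : symmetric g) (girr : irreflexive g).
Hypotheses (k_gt1 : 1 < k) (kconn : k_connected g k) (T_gt2 : 2 < #|T|).

Definition induced (A : {pred T}) : rel T := [rel u w | [&& g u w, u \in A & w \in A]].

Lemma connect_induced_mem (A : {pred T}) x y :
  x \in A -> connect (induced A) x y -> y \in A.
Proof. by apply: connect_stable => u w _ /and3P[]. Qed.

Lemma connect_induced_compl (S : {set T}) x y :
  #|S| < k -> x \notin S -> y \notin S -> connect (induced (~: S)) x y.
Proof. by move=> Sk xS yS; case: kconn => _ /(_ S Sk); apply; rewrite inE. Qed.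

Lemma exists_neighbour_notin (S : {set T}) x y :
  #|S| < k -> x \notin S -> y \notin S -> x != y -> exists2 u, g x u & u \notin S.
Proof.
move=> Sk xS yS xy; case/connectP: (connect_induced_compl Sk xS yS) => -[|u p] /=.
  by move=> _ yx; rewrite yx eqxx in xy.
by case/andP=> /and3P[gxu _]; rewrite inE => uS _ _; exists u.
Qed.

Lemma two_le_deg x : 1 < deg g x.
Proof.
have /card_gt0P[y] : 0 < #|[set~ x]| by rewrite cardsC1; lia.
rewrite in_setC1 => yx.
have [u gxu _] : exists2 u, g x u & u \notin set0.
  by apply: (exists_neighbour_notin (y := y)); rewrite ?cards0 ?inE 1?eq_sym //; lia.
have xu : x != u by apply: contraTneq gxu => <-; rewrite girr.
have /card_gt0P[z] : 0 < #|~: [set x; u]|.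
  by have := cardsC [set x; u]; rewrite cards2; lia.
rewrite !inE negb_or => /andP[zx zu].
have [u' gxu' u'u] : exists2 u', g x u' & u' \notin [set u].
  by apply: (exists_neighbour_notin (y := z)); rewrite ?cards1 ?inE // eq_sym.
by apply/card_gt1P; exists u, u'; rewrite !inE gxu gxu' eq_sym; rewrite inE in u'u.
Qed.

Lemma two_le_mindeg : 1 < mindeg g.
Proof.
rewrite /mindeg; apply: (big_ind (fun m => 1 < m)); first lia.
  by move=> a b; rewrite leq_min => -> ->.
by move=> x _; apply: two_le_deg.
Qed.

Lemma exists_graph_cycle : exists C, graph_cycle g C.
Proof.
have /card_gt0P[x _] : 0 < #|T| by lia.
have /card_gt1P[y [z [gxy gxz yz]]] := two_le_deg x; rewrite !inE in gxy gxz.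
have offx u : g x u -> u \notin [set x].
  by move=> gxu; rewrite inE; apply: contraTneq gxu => ->; rewrite girr.
have /connectP[p pp ez] : connect (induced (~: [set x])) y z.
  by apply: connect_induced_compl; rewrite ?cards1 ?offx.
case/shortenP: pp ez => p' pp' up' _ ez.
exists [:: x, y & p']; apply/and3P; split.
- rewrite cons_uniq up' andbT; apply/negP => xp'.
  suff: x \in ~: [set x] by rewrite !inE eqxx.
  by apply: (connect_induced_mem (x := y)); [rewrite inE offx | exact: path_connect pp' _ xp'].
- by case: p' {pp' up'} ez => [/= zy|]; [rewrite zy eqxx in yz|].
- rewrite /= gxy rcons_path -ez gsym gxz andbT.
  by apply: sub_path pp' => u w /and3P[].
Qed.

Lemma induced_sym (A : {pred T}) : symmetric (induced A).
Proof. by move=> a b; rewrite /induced /= gsym (andbC (a \in A)). Qed.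

Lemma graph_cycle_size C : graph_cycle g C -> size C <= #|T|.
Proof. by case/and3P=> /card_uniqP <- _ _; apply: max_card. Qed.

Lemma exists_longest_cycle :
  exists2 C, graph_cycle g C & forall D, graph_cycle g D -> size D <= size C.
Proof.
have [C0 gC0] := exists_graph_cycle.
pose has_cycle m := [exists C : m.-tuple T, graph_cycle g C].
have exP : exists m, has_cycle m by exists (size C0); apply/existsP; exists (in_tuple C0).
have ubP m : has_cycle m -> m <= #|T|.
  by case/existsP=> C /graph_cycle_size; rewrite size_tuple.
case: (ex_maxnP exP ubP) => m /existsP[C gC] maxC.
exists C => // D gD; rewrite size_tuple; apply: maxC.
by apply/existsP; exists (in_tuple D).
Qed.

Section LongestCycle.
Variables (C : seq T) (v : T).
Hypotheses (C_cycle : graph_cycle g C) (vC : v \notin C).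
Hypothesis C_longest : forall D, graph_cycle g D -> size D <= size C.

Let C_uniq : uniq C. Proof. by case/and3P: C_cycle. Qed.

Lemma no_longer_cycle : ~ exists2 D, graph_cycle g D & size C < size D.
Proof. by case=> D /C_longest; rewrite leqNgt => /negP. Qed.

Definition outer_comp := [set u | connect (induced [predC C]) v u].
Definition attach := [set x in C | [exists h in outer_comp, g h x]].
Definition succ_attach := v |: [set next C x | x in attach].

Lemma outer_comp_notin u : u \in outer_comp -> u \notin C.
Proof.
by rewrite inE => /(connect_induced_mem (A := [predC C])); rewrite !inE; apply.
Qed.

Lemma outer_comp_step a b : a \in outer_comp -> g a b -> b \notin C -> b \in outer_comp.
Proof.
move=> aH gab bC; have aC := outer_comp_notin aH; move: aH; rewrite !inE => cva.
by apply: connect_trans cva (connect1 _); rewrite /induced /= gab !inE aC bC.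
Qed.

Lemma attach_in_cycle x : x \in attach -> x \in C.
Proof. by rewrite inE => /andP[]. Qed.

Lemma attach_path x y : x \in attach -> y \in attach ->
  exists P, [/\ path g x (rcons P y), uniq P, P != [::] & {subset P <= outer_comp}].
Proof.
rewrite !inE => /andP[_ /existsP[h1 /andP[h1H gh1x]]] /andP[_ /existsP[h2 /andP[h2H gh2y]]].
have /connectP[p pp e2] : connect (induced [predC C]) h1 h2.
  move: h1H h2H; rewrite !inE => c1 c2.
  by apply: connect_trans _ c2; rewrite (sym_connect_sym (induced_sym _)).
case/shortenP: pp e2 => p' pp' up' _ e2.
exists (h1 :: p'); split => //.
  rewrite /= rcons_path -e2 (gsym x) gh1x gh2y andbT.
  by apply: sub_path pp' => a b /and3P[].
move=> q /(path_connect pp') c1q; move: h1H; rewrite !inE => cv1.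
exact: connect_trans cv1 c1q.
Qed.

Lemma next_attach_notin x : x \in attach -> next C x \notin attach.
Proof.
move=> xS; apply/negP => nS; have [P [pP uP P0 PH]] := attach_path xS nS.
apply: no_longer_cycle; apply: (longer_cycle_insert C_cycle (attach_in_cycle xS) pP uP P0).
by move=> p /PH /outer_comp_notin.
Qed.

Lemma no_cross_path x y Q : x \in attach -> y \in attach -> x != y ->
  path g (next C x) (rcons Q (next C y)) -> uniq Q ->
  {in Q, forall q, (q \notin C) && (q \notin outer_comp)} -> False.
Proof.
move=> xS yS xy pQ uQ QC; have [P [pP uP P0 PH]] := attach_path xS yS.
apply: no_longer_cycle.
apply: (longer_cycle_cross gsym C_cycle (attach_in_cycle xS) (attach_in_cycle yS)
          xy pP uP P0 _ pQ uQ) => [p /PH /outer_comp_notin //|q /QC /andP[-> qH]].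
by apply: contra qH => /PH.
Qed.

Lemma attach_card : k <= #|attach|.
Proof.
rewrite leqNgt; apply/negP => Sk.
have [y yC yS] : exists2 y, y \in C & y \notin attach.
  have [c cC] : exists c, c \in C.
    by case/and3P: C_cycle => _; case: (C) => // c s _ _; exists c; rewrite mem_head.
  have [cS|cS] := boolP (c \in attach); last by exists c.
  by exists (next C c); rewrite ?mem_next ?next_attach_notin.
have vS : v \notin attach by apply: contra vC => /attach_in_cycle.
suff /outer_comp_notin : y \in outer_comp by rewrite yC.
apply: (connect_stable _ _ (connect_induced_compl Sk vS yS)); last by rewrite inE connect0.
move=> a b aH /and3P[gab _]; rewrite inE => bS; apply: (outer_comp_step aH gab).
by apply: contra bS => bC; rewrite inE bC; apply/existsP; exists a; rewrite aH gab.
Qed.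

Lemma card_succ_attach : #|succ_attach| = #|attach|.+1.
Proof.
rewrite cardsU1 card_imset; last exact: (can_inj (prev_next C_uniq)).
suff -> : v \notin [set next C x | x in attach] by [].
by apply/imsetP => -[x xS vE]; move: vC; rewrite vE mem_next attach_in_cycle.
Qed.

Lemma succ_attachP u :
  u \in succ_attach -> u = v \/ exists2 x, x \in attach & u = next C x.
Proof. by case/setU1P => [->|/imsetP[x xS ->]]; [left | right; exists x]. Qed.

Lemma not_adj_v_next x : x \in attach -> ~~ g v (next C x).
Proof.
move=> xS; apply: contra (next_attach_notin xS) => gv.
by rewrite inE mem_next attach_in_cycle //=; apply/existsP; exists v; rewrite gv inE connect0.
Qed.

Lemma succ_attach_indep : independent g succ_attach.
Proof.
move=> a b /succ_attachP[->|[x xS ->]] /succ_attachP[->|[y yS ->]].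
- by rewrite girr.
- exact: not_adj_v_next.
- by rewrite gsym not_adj_v_next.
- have [<-|xy] := eqVneq x y; first by rewrite girr.
  by apply/negP => gxy; apply: (no_cross_path (Q := [::]) xS yS xy) => //=; rewrite gxy.
Qed.

Lemma neighbour_off_succ_attach w : w \notin succ_attach -> w \notin attach ->
  exists2 u, g w u & u \notin succ_attach.
Proof.
move=> wI wS.
have [/existsP[u /andP[gwu uI]]|] := boolP [exists u, g w u && (u \notin succ_attach)].
  by exists u.
rewrite negb_exists => /forallP nbrI; exfalso.
have inI u : g w u -> u \in succ_attach by move=> gwu; move: (nbrI u); rewrite gwu negbK.
have [wC|wC] := boolP (w \in C).
  have /and3P[_ _ cycC] := C_cycle.
  case/succ_attachP: (inI _ (next_cycle cycC wC)) => [nv|[x xS nx]].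
    by move: vC; rewrite -nv mem_next wC.
  by move: wS; rewrite (can_inj (prev_next C_uniq) nx) xS.
have /card_gt1P[u1 [u2 [+ + u12]]] := two_le_deg w; rewrite !inE => gw1 gw2.
have [wH|wH] := boolP (w \in outer_comp).
  suff nbr_v u : g w u -> u = v by move: u12; rewrite (nbr_v _ gw1) (nbr_v _ gw2) eqxx.
  move=> gwu; case/succ_attachP: (inI _ gwu) => // -[x xS ux].
  case/negP: (next_attach_notin xS); rewrite -ux inE ux mem_next attach_in_cycle //=.
  by apply/existsP; exists w; rewrite wH -ux gwu.
have nbr_next u : g w u -> exists2 x, x \in attach & u = next C x.
  move=> gwu; case/succ_attachP: (inI _ gwu) => // uv.
  by case/negP: wH; apply: (outer_comp_step (a := v)); rewrite ?inE ?connect0 // gsym -uv.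
have [x1 x1S e1] := nbr_next _ gw1; have [x2 x2S e2] := nbr_next _ gw2.
have x12 : x1 != x2 by apply: contraNneq u12 => ex; rewrite e1 e2 ex.
apply: (no_cross_path (Q := [:: w]) x1S x2S x12) => /=.
- by rewrite -e1 -e2 (gsym _ w) gw1 gw2.
- done.
- by move=> q; rewrite inE => /eqP ->; rewrite wC wH.
Qed.

(* Otherwise [succ_attach] is an independent vertex cover larger than its
   complement, and counting edges from both sides forces [mindeg < maxdeg]. *)
Lemma nonregular_or_edge_off_succ_attach : mindeg g < maxdeg g \/
  exists a b, [&& g a b, a \notin succ_attach & b \notin succ_attach].
Proof.
set X := succ_attach.
pose edge_off := [exists a, exists b, [&& g a b, a \notin X & b \notin X]].
have [/existsP[a /existsP[b ab]]|] := boolP edge_off; first by right; exists a, b.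
rewrite negb_exists => /forallP noedge; left.
have coverS : ~: X \subset attach.
  apply/subsetP => w; rewrite inE => wI; apply/negPn/negP => wS.
  have [u gwu uI] := neighbour_off_succ_attach wI wS.
  by move: (noedge w); rewrite negb_exists => /forallP/(_ u); rewrite gwu wI uI.
have ltI : #|~: X| < #|X| by rewrite card_succ_attach ltnS subset_leq_card.
have le_deg : #|X| * mindeg g <= #|~: X| * maxdeg g.
  apply: leq_trans (card_mindeg_le_sum_deg g X) _.
  apply: leq_trans (sum_deg_indep_le girr succ_attach_indep) _.
  apply: leq_trans (nedges_le_sum_deg_compl gsym succ_attach_indep) _.
  exact: sum_deg_le_card_maxdeg.
have maxdeg_gt0 : 0 < maxdeg g.
  by apply: leq_trans (deg_le_maxdeg g v); apply: ltnW (two_le_deg v).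
rewrite -(ltn_pmul2l (leq_ltn_trans (leq0n _) ltI)).
by apply: leq_ltn_trans le_deg _; rewrite ltn_pmul2r.
Qed.

End LongestCycle.

Theorem hamiltonian_or_large_independent : hamiltonian g \/
  exists I, [/\ independent g I, k < #|I| &
    mindeg g < maxdeg g \/ exists a b, [&& g a b, a \notin I & b \notin I]].
Proof.
have [C gC C_longest] := exists_longest_cycle.
have [/forallP allC|/forallPn[v vC]] := boolP [forall x, x \in C].
  by left; exists C; case/and3P: gC.
right; exists (succ_attach C v); split.
- exact: (succ_attach_indep gC vC C_longest).
- by rewrite (card_succ_attach gC vC) ltnS (attach_card gC vC C_longest).
- exact: (nonregular_or_edge_off_succ_attach gC vC C_longest).
Qed.

End Connectivity.

Local Open Scope ring_scope.

Section RealDegreeBounds.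
Variables (R : realFieldType) (T : finType) (g : rel T).
Hypotheses (gsym : symmetric g) (girr : irreflexive g).
Let n : R := #|T|%:R.
Let e : R := (nedges g)%:R.
Let d : R := (mindeg g)%:R.
Let D : R := (maxdeg g)%:R.

Lemma card_compl_le (I : {set T}) (K : R) : K <= #|I|%:R -> #|~: I|%:R <= n - K.
Proof. by rewrite /n -(cardsC I) natrD; lra. Qed.

Lemma forgotten_ge : (0 < #|T|)%N -> D ^+ 3 + (n - 1) * d ^+ 3 <= forgotten g R.
Proof.
move=> T0; rewrite /forgotten (eq_bigr (fun x => (deg g x ^ 3)%:R)) => [|x _]; last first.
  by rewrite natrX.
have -> : n - 1 = (#|T| - 1)%:R by rewrite natrB.
rewrite /D /d -natr_sum -!natrX -!natrM -natrD ler_nat.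
have [x1 Ex1] := bigop.eq_bigmax (deg g) T0.
rewrite (bigD1 x1) //= /maxdeg Ex1 leq_add2l subn1 -(cardC1 x1) -sum_nat_const.
by apply: leq_sum => x _; rewrite leq_exp2r ?mindeg_le_deg.
Qed.

Lemma inv_degree_ge : (0 < mindeg g)%N -> n / D <= inv_degree g R.
Proof.
move=> /leq_trans deg_gt0; have {}deg_gt0 x := deg_gt0 _ (mindeg_le_deg g x).
rewrite /inv_degree mulr_natl -sumr_const; apply: ler_sum => x _.
have D_gt0 : 0 < D by rewrite ltr0n (leq_trans (deg_gt0 x)) ?deg_le_maxdeg.
by rewrite lef_pV2 ?posrE ?D_gt0 ?ltr0n ?deg_gt0 // /D ler_nat deg_le_maxdeg.
Qed.

Variables (I : {set T}) (K : R).
Hypotheses (indI : independent g I) (K_le_I : K <= #|I|%:R).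

Lemma indep_mindeg_le : K * d <= e.
Proof.
apply: le_trans (ler_wpM2r (ler0n _ _) K_le_I) _; rewrite -natrM ler_nat.
exact: leq_trans (card_mindeg_le_sum_deg g I) (sum_deg_indep_le girr indI).
Qed.

Lemma indep_mindeg_strict :
  (mindeg g < maxdeg g)%N \/ (exists a b, [&& g a b, a \notin I & b \notin I]) ->
  d < D \/ K * d < e.
Proof.
case=> [|[a [b /and3P[gab aI bI]]]]; first by left; rewrite ltr_nat.
right; apply: le_lt_trans (ler_wpM2r (ler0n _ _) K_le_I) _; rewrite -natrM ltr_nat.
exact: leq_ltn_trans (card_mindeg_le_sum_deg g I) (sum_deg_indep_lt girr indI gab aI bI).
Qed.

Lemma indep_zagreb1_le : Zagreb1 g R <= D * e + (n - K) * D ^+ 2.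
Proof.
rewrite /Zagreb1 (eq_bigr (fun x => (deg g x ^ 2)%:R)) => [|x _]; last by rewrite natrX.
apply: (@le_trans _ _ (maxdeg g * nedges g + #|~: I| * maxdeg g ^ 2)%N%:R).
  rewrite -natr_sum ler_nat (bigID (mem I)) /=; apply: leq_add.
    rewrite (leq_trans _ (leq_mul (leqnn _) (sum_deg_indep_le girr indI))) // big_distrr.
    by apply: leq_sum => x _; rewrite -mulnn leq_mul2r deg_le_maxdeg orbT.
  rewrite -sum_nat_const [leqRHS](eq_bigl (fun x => x \notin I)) => [|x]; last by rewrite inE.
  by apply: leq_sum => x _; rewrite leq_exp2r ?deg_le_maxdeg.
by rewrite natrD !natrM -expr2 /D /e lerD2l ler_wpM2r ?exprn_ge0 ?ler0n ?card_compl_le.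
Qed.

Lemma indep_nedges_le : e <= (n - K) * D.
Proof.
apply: le_trans (ler_wpM2r (ler0n _ _) (card_compl_le K_le_I)); rewrite -natrM ler_nat.
exact: leq_trans (nedges_le_sum_deg_compl gsym indI) (sum_deg_le_card_maxdeg g _).
Qed.

End RealDegreeBounds.

Section IndexGaps.
Variables (R : realFieldType) (K m d D e : R).

Lemma zagreb_gap : 0 < d -> d <= D -> 0 < K -> d < D \/ K * d < e ->
  D * e < e ^+ 2 / (2 * K) + K * D ^+ 3 / (2 * d).
Proof.
move=> d_gt0 dD K_gt0 strict.
have -> : e ^+ 2 / (2 * K) + K * D ^+ 3 / (2 * d) =
    D * e + ((e - K * D) ^+ 2 * d + K ^+ 2 * D ^+ 2 * (D - d)) / (2 * K * d).
  by field; rewrite !gt_eqF.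
rewrite ltrDl divr_gt0 ?mulr_gt0 //.
have sq_ge0 : 0 <= (e - K * D) ^+ 2 * d by rewrite mulr_ge0 ?sqr_ge0 ?ltW.
have [d_lt_D|D_le_d] := ltrP d D.
  suff : 0 < K ^+ 2 * D ^+ 2 * (D - d) by lra.
  by rewrite !mulr_gt0 ?exprn_gt0 ?subr_gt0 //; lra.
have Kde : K * d < e by case: strict => // d_lt_D; move: D_le_d; rewrite leNgt d_lt_D.
have <- : d = D by apply: le_anti; rewrite dD.
by rewrite subrr mulr0 addr0 mulr_gt0 // exprn_even_gt0 //= subr_eq0 (gt_eqF Kde).
Qed.

Lemma forgotten_gap : 0 < d -> d <= D -> 0 < K -> K * d <= e -> d < D \/ K * d < e ->
  d * (2 * K ^+ 2 * d ^+ 2 - e ^+ 2) / K < K * d ^+ 3 + (D ^+ 3 - d ^+ 3).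
Proof.
move=> d_gt0 dD K_gt0 Kde strict.
rewrite ltr_pdivrMr //.
have cube_le : d ^+ 3 <= D ^+ 3 by rewrite lerXn2r ?nnegrE //; lra.
have sqr_le : (K * d) ^+ 2 <= e ^+ 2 by rewrite lerXn2r ?nnegrE //; nra.
case: strict => [d_lt_D|Kd_lt_e].
  have : d ^+ 3 < D ^+ 3 by rewrite ltrXn2r ?nnegrE //; lra.
  nra.
have : (K * d) ^+ 2 < e ^+ 2 by rewrite ltrXn2r ?nnegrE //; nra.
nra.
Qed.

Lemma inv_degree_gap : 0 < d -> d <= D -> 0 < K -> K * d <= e -> d < D \/ K * d < e ->
  (2 * K ^+ 2 * d ^+ 2 - e ^+ 2) / (K * D ^+ 3) < K / D.
Proof.
move=> d_gt0 dD K_gt0 Kde strict; have D_gt0 : 0 < D by lra.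
rewrite ltr_pdivrMr ?mulr_gt0 ?exprn_gt0 //.
have -> : K / D * (K * D ^+ 3) = K ^+ 2 * D ^+ 2 by field; rewrite gt_eqF.
have sqr_le : (K * d) ^+ 2 <= e ^+ 2 by rewrite lerXn2r ?nnegrE //; nra.
case: strict => [d_lt_D|Kd_lt_e].
  have : K ^+ 2 * d ^+ 2 < K ^+ 2 * D ^+ 2.
    by rewrite ltr_pM2l ?exprn_gt0 // ltrXn2r ?nnegrE //; lra.
  move: sqr_le; rewrite exprMn; lra.
have : (K * d) ^+ 2 < e ^+ 2 by rewrite ltrXn2r ?nnegrE //; nra.
have : d ^+ 2 <= D ^+ 2 by rewrite lerXn2r ?nnegrE //; lra.
rewrite exprMn => dD2 Kde2; have := ler_wpM2l (ltW (exprn_gt0 2 K_gt0)) dD2; lra.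
Qed.

Lemma sqr_div_le : 0 < m -> 0 <= e -> e <= m * D -> e ^+ 2 / m <= m * D ^+ 2.
Proof. by move=> m_gt0 e_ge0 emD; rewrite ler_pdivrMr //; nra. Qed.

Lemma forgotten_rhs_le : 0 <= d -> 0 < K -> 0 < m -> 0 <= e -> e <= m * D ->
  d / K * (2 * K * (K * d ^+ 2 + e ^+ 2 / m) - e ^+ 2 - 2 * K * m * D ^+ 2)
    <= d * (2 * K ^+ 2 * d ^+ 2 - e ^+ 2) / K.
Proof.
move=> d_ge0 K_gt0 m_gt0 e_ge0 emD.
have -> : d / K * (2 * K * (K * d ^+ 2 + e ^+ 2 / m) - e ^+ 2 - 2 * K * m * D ^+ 2)
    = d * (2 * K ^+ 2 * d ^+ 2 - e ^+ 2) / K - 2 * d * (m * D ^+ 2 - e ^+ 2 / m).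
  by field; rewrite !gt_eqF.
by rewrite gerDl oppr_le0 mulr_ge0 ?subr_ge0 ?sqr_div_le // mulr_ge0.
Qed.

Lemma inv_degree_rhs_le : 0 < D -> 0 < K -> 0 < m -> 0 <= e -> e <= m * D ->
  (K * D ^+ 3)^-1 * (2 * K * (K * d ^+ 2 + e ^+ 2 / m) - e ^+ 2 - 2 * K * m * D ^+ 2)
    <= (2 * K ^+ 2 * d ^+ 2 - e ^+ 2) / (K * D ^+ 3).
Proof.
move=> D_gt0 K_gt0 m_gt0 e_ge0 emD.
have -> : (K * D ^+ 3)^-1 * (2 * K * (K * d ^+ 2 + e ^+ 2 / m) - e ^+ 2 - 2 * K * m * D ^+ 2)
    = (2 * K ^+ 2 * d ^+ 2 - e ^+ 2) / (K * D ^+ 3) - 2 / D ^+ 3 * (m * D ^+ 2 - e ^+ 2 / m).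
  by field; rewrite !gt_eqF.
by rewrite gerDl oppr_le0 mulr_ge0 ?subr_ge0 ?sqr_div_le // divr_ge0 ?exprn_ge0 // ltW.
Qed.

End IndexGaps.

Theorem theorem2 (R : realFieldType) (T : finType) (g : rel T) (k : nat) :
  simple_graph g -> (2 <= k)%N -> k_connected g k -> (3 <= #|T|)%N ->
  let n : R := (#|T|)%:R in
  let e : R := (nedges g)%:R in
  let d : R := (mindeg g)%:R in
  let D : R := (maxdeg g)%:R in
  let kk : R := k%:R in
  ( (Zagreb1 g R >= (n - kk - 1) * D ^+ 2 + e ^+ 2 / (2 * (kk + 1))
                      + (kk + 1) * D ^+ 3 / (2 * d)) \/
      (forgotten g R <= (n - kk - 1) * d ^+ 3
                      + d * (2 * (kk + 1) ^+ 2 * d ^+ 2 - e ^+ 2) / (kk + 1)) \/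
      (forgotten g R <= (n - kk - 1) * d ^+ 3
                      + d / (kk + 1) * (2 * (kk + 1) * ((kk + 1) * d ^+ 2
                            + e ^+ 2 / (n - kk - 1)) - e ^+ 2
                            - 2 * (kk + 1) * (n - kk - 1) * D ^+ 2)) \/
      (inv_degree g R <= (n - kk - 1) / D
                      + (2 * (kk + 1) ^+ 2 * d ^+ 2 - e ^+ 2) / ((kk + 1) * D ^+ 3)) \/
      (inv_degree g R <= (n - kk - 1) / D
                      + ((kk + 1) * D ^+ 3)^-1 * (2 * (kk + 1) * ((kk + 1) * d ^+ 2
                            + e ^+ 2 / (n - kk - 1)) - e ^+ 2
                            - 2 * (kk + 1) * (n - kk - 1) * D ^+ 2)) ) ->
  hamiltonian g.
Proof.
move=> [gsym girr] k_gt1 kconn T_gt2 n e d D kk.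
have [//|[I [indI kI strict]]] := hamiltonian_or_large_independent gsym girr k_gt1 kconn T_gt2.
have mindeg_gt1 := two_le_mindeg girr k_gt1 kconn T_gt2.
have T_gt0 : (0 < #|T|)%N by apply: leq_trans T_gt2.
have d_gt0 : 0 < d by rewrite ltr0n ltnW.
have dD : d <= D by rewrite ler_nat mindeg_le_maxdeg.
have K_gt0 : 0 < kk + 1 by rewrite ltr_pwDr ?ler0n.
have K_le_I : kk + 1 <= #|I|%:R by rewrite natr1 ler_nat.
have Kde := indep_mindeg_le girr indI K_le_I.
have strictR := indep_mindeg_strict girr indI K_le_I strict.
have emD := indep_nedges_le gsym indI K_le_I.
have Z := indep_zagreb1_le girr indI K_le_I.
rewrite opprD addrA in emD Z.
have F := forgotten_ge R g T_gt0.
have V := inv_degree_ge R (ltnW mindeg_gt1).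
have D_gt0 : 0 < D by lra.
have m_gt0 : 0 < n - kk - 1.
  by rewrite -(pmulr_lgt0 _ D_gt0); have := mulr_gt0 K_gt0 d_gt0; lra.
have gapF := forgotten_gap d_gt0 dD K_gt0 Kde strictR.
have gapV := inv_degree_gap d_gt0 dD K_gt0 Kde strictR.
case=> [|[|[|[|]]]].
- by have := zagreb_gap d_gt0 dD K_gt0 strictR; lra.
- by lra.
- by have := forgotten_rhs_le (ltW d_gt0) K_gt0 m_gt0 (ler0n _ _) emD; lra.
- by lra.
- by have := inv_degree_rhs_le d D_gt0 K_gt0 m_gt0 (ler0n _ _) emD; lra.
Qed.
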